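(* Let $M$ be a PVM on a finite-dimensional Hilbert space consisting of rank-one projections ($w(M)=1$) which commutes with a density operator $\sigma$. Then for every density operator $\rho$ and every $a\in\mathbb{R}$, $$\mathrm{P}^M_\rho\{\log\mathrm{P}^M_\sigma(\omega)\ge a\}\le\exp\Bigl(-\sup_{t\ge0}\bigl(at-\log\mathrm{Tr}\rho\sigma^t\bigr)\Bigr).$$
   Context: $\mathrm{P}^M_\rho(\omega)=\mathrm{Tr}\rho M_\omega$ is the outcome distribution of the PVM $M=\{M_\omega\}$ in state $\rho$; $M$ commutes with $\sigma$ if $\sigma M_\omega=M_\omega\sigma$ for all $\omega$; $w(M)=\sup_\omega\dim(\mathrm{range}\,M_\omega)$. *)

From HB Require Import structures.
From mathcomp Require Import all_boot all_order all_algebra.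
From mathcomp Require Import sesquilinear spectral.
From mathcomp Require Import complex.
From mathcomp Require Import all_classical all_reals.
From mathcomp Require Import ereal exp.

Set Implicit Arguments.
Unset Strict Implicit.
Unset Printing Implicit Defensive.

Import Order.TTheory GRing.Theory Num.Theory.
Local Open Scope ring_scope.

(* The Hilbert space is C^n with C = R[i], R a real type.
   Matrices act on row vectors; A ^t* is the adjoint (conjugate transpose). *)
Section QDefs.
Variable R : realType.
Local Notation C := R[i].

Definition psdmx n (A : 'M[C]_n) : Prop :=
  map_mx Num.conj A^T = A /\ forall v : 'rV[C]_n, 0 <= (v *m A *m map_mx Num.conj v^T) 0 0.

Definition density n (rho : 'M[C]_n) : Prop := psdmx rho /\ \tr rho = 1.

Definition PVM n (Omega : finType) (M : Omega -> 'M[C]_n) : Prop :=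
  (forall w, map_mx Num.conj (M w)^T = M w /\ M w *m M w = M w) /\
  \sum_(w : Omega) M w = 1%:M.

Definition commutes_with n (Omega : finType) (M : Omega -> 'M[C]_n)
  (sigma : 'M[C]_n) : Prop :=
  forall w, sigma *m M w = M w *m sigma.

Definition pvm_width n (Omega : finType) (M : Omega -> 'M[C]_n) : nat :=
  \max_(w : Omega) \rank (M w).

Definition outcome_prob n (Omega : finType) (M : Omega -> 'M[C]_n)
  (rho : 'M[C]_n) (w : Omega) : R :=
  complex.Re (\tr (rho *m M w)).

(* sigma^t for a positive semidefinite sigma and real t, via the spectral
   decomposition sigma = P^-1 diag(lambda) P (P unitary), with
   sigma^t = P^-1 diag(lambda^t) P; lambda^t = powR lambda t
   (so 0^t = 0 for t <> 0 and 0^0 = 1). *)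
Definition mxpowR n (sigma : 'M[C]_n) (t : R) : 'M[C]_n :=
  invmx (spectralmx sigma) *m
  diag_mx (\row_i (real_complex R (powR (complex.Re (spectral_diag sigma 0 i)) t)))
  *m spectralmx sigma.

Definition elog (x : R) : \bar R := if 0 < x then (ln x)%:E else -oo%E.

End QDefs.

(* Rank-one projections commuting with sigma are eigenprojections of sigma:
   M_w sigma = P^M_sigma(w) M_w, hence sigma^t = sum_w P^M_sigma(w)^t M_w and
   Tr rho sigma^t = sum_w P^M_sigma(w)^t P^M_rho(w).  The bound is then Chernoff's
   inequality for the distribution P^M_rho: on the event log P^M_sigma(w) >= a
   we have e^(a t) <= P^M_sigma(w)^t for every t >= 0. *)

Set Warnings "-notation-overridden,-ambiguous-paths,-notation-incompatible-prefix".
From HB Require Import structures.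
From mathcomp Require Import all_boot all_order all_algebra.
From mathcomp Require Import sesquilinear spectral.
From mathcomp Require Import complex.
From mathcomp Require Import all_classical all_reals.
From mathcomp Require Import ereal exp.
From mathcomp Require Import sequences lra.

Set Implicit Arguments.
Unset Strict Implicit.
Unset Printing Implicit Defensive.

Import Order.TTheory GRing.Theory Num.Theory.
Local Open Scope ring_scope.
Local Open Scope classical_set_scope.

Lemma rank_le1_mulmx_sandwich (F : fieldType) n (P A : 'M[F]_n) :
  (\rank P <= 1)%N -> P *m A *m P = \tr (A *m P) *: P.
Proof.
rewrite leq_eqVlt ltnS leqn0 mxrank_eq0 => /orP[/eqP rk1 | /eqP->]; last first.
  by rewrite mulmx0 scaler0.
have := mulmx_base P; move: (col_base P) (row_base P); rewrite rk1 => x y <-.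
have -> : \tr (A *m (x *m y)) = (y *m A *m x) 0 0.
  by rewrite mulmxA mxtrace_mulC mulmxA /mxtrace big_ord1.
rewrite !mulmxA -(mulmxA x y A) -(mulmxA x (y *m A) x).
by rewrite {1}(mx11_scalar (y *m A *m x)) mul_mx_scalar scalemxAl.
Qed.

Lemma idem_rank_le1_mul_comm (F : fieldType) n (P S : 'M[F]_n) :
  (\rank P <= 1)%N -> P *m P = P -> S *m P = P *m S ->
  P *m S = \tr (S *m P) *: P.
Proof.
by move=> rkP idemP SP; rewrite -rank_le1_mulmx_sandwich // -mulmxA SP mulmxA idemP.
Qed.

Section ComplexMatrices.
Variable R : realType.
Local Notation C := R[i].

Lemma Re_sum (I : finType) (F : I -> C) :
  complex.Re (\sum_i F i) = \sum_i complex.Re (F i).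
Proof. exact: (raddf_sum (@complex.Re R : Rcomplex R -> R)). Qed.

Lemma Re_real_complexM (r : R) (z : C) :
  complex.Re (real_complex R r * z) = r * complex.Re z.
Proof. by case: z => u v /=; rewrite mul0r subr0. Qed.

Lemma Re_ge0 (z : C) : 0 <= z -> 0 <= complex.Re z.
Proof. by rewrite lecE => /andP[]. Qed.

Lemma psdmx_normal n (A : 'M[C]_n) : psdmx A -> A \is normalmx.
Proof. by move=> [hermA _]; apply/normalmxP; rewrite hermA. Qed.

Lemma psdmx_trace_conj_ge0 m n (A : 'M[C]_n) (B : 'M[C]_(m, n)) :
  psdmx A -> 0 <= \tr (B *m A *m map_mx Num.conj B^T).
Proof.
move=> [_ psdA]; apply: sumr_ge0 => i _.
have -> : (B *m A *m map_mx Num.conj B^T) i i =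
    (row i B *m A *m map_mx Num.conj (row i B)^T) 0 0.
  by rewrite -row_mul !mxE; apply: eq_bigr => k _; rewrite !mxE.
exact: psdA.
Qed.

Lemma mulmx_mxpowR_eigen n (S P : 'M[C]_n) (c : C) (t : R) :
  S \is normalmx -> P *m S = c *: P ->
  P *m mxpowR S t = real_complex R (powR (complex.Re c) t) *: P.
Proof.
(* In the eigenbasis of S, U := P V^-1 satisfies U D = c U, so every nonzero
   column j of U has D_j = c; hence U f(D) = f(c) U for any function f. *)
move=> /orthomx_spectralP defS PS.
have Vu := spectral_unit S.
set V := spectralmx S in defS Vu *; set D := spectral_diag S in defS *.
set U := P *m invmx V.
have defP : P = U *m V by rewrite /U mulmxKV.
have UD : U *m diag_mx D = c *: U.
  move: PS; rewrite {1}defS defP !mulmxA mulmxK // => /(congr1 (mulmx^~ (invmx V))).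
  by rewrite mulmxK // -scalemxAl mulmxK.
clearbody U.
rewrite /mxpowR -/V defP !mulmxA mulmxK // scalemxAl; congr (_ *m _).
apply/matrixP=> i j; rewrite mul_mx_diag !mxE.
move/matrixP: UD => /(_ i j); rewrite mul_mx_diag !mxE => UDij.
have [->|Uij0] := eqVneq (U i j) 0; first by rewrite mul0r mulr0.
suff -> : D 0 j = c by rewrite mulrC.
by apply/(mulIf Uij0); rewrite [LHS]mulrC UDij.
Qed.

Section RankOnePVM.
Variables (n : nat) (Omega : finType) (M : Omega -> 'M[C]_n).
Hypothesis PVM_M : PVM M.

Lemma outcome_prob_ge0 rho w : psdmx rho -> 0 <= outcome_prob M rho w.
Proof.
move=> psd_rho; apply: Re_ge0.
have [herm_Mw idem_Mw] := PVM_M.1 w.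
rewrite -idem_Mw mulmxA mxtrace_mulC mulmxA -{2}herm_Mw.
exact: psdmx_trace_conj_ge0.
Qed.

Variable sigma : 'M[C]_n.
Hypotheses (width_M : (pvm_width M <= 1)%N) (comm_sigma : commutes_with M sigma).

Lemma mulmx_pvm_eigen w : M w *m sigma = \tr (sigma *m M w) *: M w.
Proof.
apply: idem_rank_le1_mul_comm; [|exact: (PVM_M.1 w).2|exact: comm_sigma].
exact: leq_trans (leq_bigmax w) width_M.
Qed.

Hypothesis normal_sigma : sigma \is normalmx.

Lemma mxpowR_pvm_sum t :
  mxpowR sigma t = \sum_w real_complex R (powR (outcome_prob M sigma w) t) *: M w.
Proof.
rewrite -[mxpowR sigma t]mul1mx -PVM_M.2 mulmx_suml; apply: eq_bigr => w _.
exact: mulmx_mxpowR_eigen normal_sigma (mulmx_pvm_eigen w).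
Qed.

Lemma Re_trace_mxpowR_pvm rho t :
  complex.Re (\tr (rho *m mxpowR sigma t)) =
  \sum_w powR (outcome_prob M sigma w) t * outcome_prob M rho w.
Proof.
rewrite mxpowR_pvm_sum mulmx_sumr [\tr _]linear_sum Re_sum.
by apply: eq_bigr => w _; rewrite -scalemxAr linearZ Re_real_complexM.
Qed.

End RankOnePVM.

End ComplexMatrices.

Section Chernoff.
Variable R : realType.

Lemma expR_le_powR (a x t : R) : 0 <= t -> (a%:E <= elog x)%E ->
  expR (a * t) <= powR x t.
Proof.
rewrite /elog => t0; case: ifPn => [x0|_]; last by rewrite leeNy_eq.
rewrite lee_fin => le_a_lnx.
rewrite -ler_ln ?posrE ?expR_gt0 ?powR_gt0 // expRK ln_powR mulrC.
exact: ler_wpM2l.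
Qed.

Lemma chernoff_finite (I : finType) (p q : I -> R) (a t : R) :
  (forall i, 0 <= q i) -> 0 <= t ->
  (\sum_(i | (a%:E <= elog (p i))%E) q i) * expR (a * t) <=
  \sum_i powR (p i) t * q i.
Proof.
move=> q_ge0 t0; rewrite mulr_suml.
rewrite [X in _ <= X](bigID (fun i => (a%:E <= elog (p i))%E)) /=.
apply: ler_wpDr; first by apply: sumr_ge0 => i _; rewrite mulr_ge0 ?powR_ge0.
apply: ler_sum => i le_a_pi; rewrite mulrC ler_wpM2r //.
exact: expR_le_powR.
Qed.

Lemma le_expeR_ereal_sup (A : set R) (f T : R -> R) (L : R) :
  (forall t, A t -> L * expR (f t) <= T t) ->
  (L%:E <= expeR (- ereal_sup [set (f t)%:E - elog (T t) | t in A]))%E.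
Proof.
move=> LT; have [L0|L0] := leP L 0.
  by apply: le_trans (expeR_ge0 _); rewrite lee_fin.
apply: (@le_trans _ _ (expeR (ln L)%:E)); first by rewrite /= lnK ?posrE.
rewrite lee_expeR leeNr -EFinN; apply: ge_ereal_sup => _ [t At <-].
have LTt := LT t At.
have Tt_gt0 : 0 < T t by apply: lt_le_trans LTt; rewrite mulr_gt0 ?expR_gt0.
rewrite /elog Tt_gt0 -EFinB lee_fin.
move: LTt; rewrite -ler_ln ?posrE ?mulr_gt0 ?expR_gt0 // lnM ?posrE ?expR_gt0 //.
rewrite expRK; lra.
Qed.

End Chernoff.

Theorem lemma12 (R : realType) (n : nat) (Omega : finType)
  (M : Omega -> 'M[R[i]]_n) (sigma rho : 'M[R[i]]_n) (a : R) :
  PVM M -> pvm_width M = 1%N -> density sigma -> commutes_with M sigma ->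
  density rho ->
  ((\sum_(w : Omega | (a%:E <= elog (outcome_prob M sigma w))%E)
      outcome_prob M rho w)%:E
   <= expeR (- ereal_sup [set ((a * t)%R%:E - elog (complex.Re (\tr (rho *m mxpowR sigma t))))%E
                         | t in [set t : R | (0 <= t)%R]]))%E.
Proof.
move=> PVM_M width_M [psd_sigma _] comm_sigma [psd_rho _].
apply: le_expeR_ereal_sup => t t0.
rewrite (Re_trace_mxpowR_pvm PVM_M) ?width_M ?psdmx_normal //.
by apply: chernoff_finite => // w; exact: outcome_prob_ge0.
Qed.
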